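(* A matrix $M\in\mathbb{R}_+^{p\times q}$ with $\operatorname{rank}(M)\ge 2$ is a slack matrix of some polytope if and only if $\{x^TM: x\in\mathbb{R}_+^p\}=\{x^TM: x\in\mathbb{R}^p\}\cap\mathbb{R}_+^q$ (equivalently, $\{Mz: z\in\mathbb{R}_+^q\}=\{Mz: z\in\mathbb{R}^q\}\cap\mathbb{R}_+^p$) and the all-ones vector $\mathbb{1}\in\mathbb{R}^p$ lies in the column span of $M$.
   Context: For a polytope $P\subseteq\mathbb{R}^n$ with $\dim(P)\ge 1$, a slack matrix of $P$ is any matrix $S=[\mathbb{1},V]\cdot[w,-W]^T\in\mathbb{R}^{p\times q}$ (so $S_{ij}=w_j-W_jv_i$, with $v_i$ the $i$th row of $V$ and $W_j$ the $j$th row of $W$), where $V\in\mathbb{R}^{p\times n}$ satisfies $P=\operatorname{conv}(\text{rows of }V)$ and $W\in\mathbb{R}^{q\times n}$, $w\in\mathbb{R}^q$ satisfy $P=\{x\in\mathbb{R}^n: Wx\le w\}$. A matrix is a slack matrix of some polytope if it is a slack matrix of some polytope of dimension at least one. *)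

From HB Require Import structures.
From mathcomp Require Import all_boot all_order all_algebra.
From mathcomp Require Import reals.
Set Implicit Arguments. Unset Strict Implicit. Unset Printing Implicit Defensive.
Import Order.TTheory GRing.Theory Num.Theory.
Local Open Scope ring_scope.

Definition in_conv (R : realType) (p n : nat) (V : 'M[R]_(p, n)) (x : 'rV[R]_n) : Prop :=
  exists lam : 'rV[R]_p,
    (forall i, 0 <= lam 0 i) /\ \sum_(i < p) lam 0 i = 1 /\ x = lam *m V.

Definition in_halfspaces (R : realType) (q n : nat) (W : 'M[R]_(q, n)) (w : 'cV[R]_q)
  (x : 'rV[R]_n) : Prop :=
  forall j, (W *m x^T) j 0 <= w j 0.

Definition is_slack_matrix (R : realType) (p q : nat) (M : 'M[R]_(p, q)) : Prop :=
  exists (n : nat) (V : 'M[R]_(p, n)) (W : 'M[R]_(q, n)) (w : 'cV[R]_q),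
    (forall x : 'rV[R]_n, in_conv V x <-> in_halfspaces W w x) /\
    (* dim(P) >= 1 : P contains two distinct points *)
    (exists x y : 'rV[R]_n, [/\ in_conv V x, in_conv V y & x != y]) /\
    M = row_mx (const_mx 1 : 'M[R]_(p, 1)) V *m (row_mx w (- W))^T.

From HB Require Import structures.
From mathcomp Require Import all_boot all_order all_algebra.
From mathcomp Require Import reals ring lra.
Import Order.TTheory GRing.Theory Num.Theory.
Set Implicit Arguments. Unset Strict Implicit. Unset Printing Implicit Defensive.
Local Open Scope ring_scope.

(* The slack matrix of P = conv V = {x | W x <= w} is S = [1, V] [w, -W]^T, and
   y S is the slack vector of the homogenized point (1^T y, y V).  As P is
   bounded, the homogenized cone {(t, u) | t w - W u >= 0} is exactly the cone
   over P, so every nonnegative vector y S of the row space of S is a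
   nonnegative combination of the rows of S; and 1 lies in the column space of S
   because P contains two distinct points.  Conversely, when 1 lies in the
   column space of M there is a rank factorization M = [1, V] B with B row-free,
   and B defines the inequalities: the cone condition on the rows of M turns
   every x with [1, x] B >= 0 into a convex combination of the rows of V.  The
   cone condition on columns is equivalent to the one on rows by Farkas' lemma. *)

Section Mx11.
Variable R : comNzRingType.

Lemma mulmx_mx11 m (a : 'M[R]_(m, 1)) (c : 'M[R]_1) : a *m c = c 0 0 *: a.
Proof. by rewrite {1}[c]mx11_scalar mul_mx_scalar. Qed.

Lemma mul_mx11_mx n (c : 'M[R]_1) (a : 'M[R]_(1, n)) : c *m a = c 0 0 *: a.
Proof. by rewrite {1}[c]mx11_scalar mul_scalar_mx. Qed.

End Mx11.

Section Farkas.
Variable R : realFieldType.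

Lemma mulmx_ge0 m n k (A : 'M[R]_(m, n)) (B : 'M[R]_(n, k)) :
  (forall i j, 0 <= A i j) -> (forall i j, 0 <= B i j) -> forall i j, 0 <= (A *m B) i j.
Proof. by move=> hA hB i j; rewrite mxE sumr_ge0 // => r _; rewrite mulr_ge0. Qed.

Definition farkas_alternative m n (A : 'M[R]_(m, n)) (b : 'cV[R]_m) : Prop :=
  (exists x : 'cV_n, (forall j, 0 <= x j 0) /\ A *m x = b) \/
  (exists y : 'rV_m, (forall j, 0 <= (y *m A) 0 j) /\ (y *m b) 0 0 < 0).

Lemma farkas_alternative0 m (A : 'M[R]_(m, 0)) b : farkas_alternative A b.
Proof.
have [->|b_neq0] := eqVneq b 0.
  by left; exists 0; split=> [j|]; rewrite ?mxE ?mulmx0.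
right; exists (- b^T); split=> [[]//|].
have sq_ge0 i : 0 <= b i 0 * b i 0 by rewrite -expr2 sqr_ge0.
rewrite mxE (eq_bigr (fun i => - (b i 0 * b i 0))); last by move=> i _; rewrite !mxE mulNr.
rewrite sumrN oppr_lt0 lt_def sumr_ge0 ?andbT => [|i _]; last exact: sq_ge0.
apply: contra b_neq0 => /eqP/(psumr_eq0P (fun i _ => sq_ge0 i)) b2_eq0.
apply/eqP/colP => i; rewrite mxE.
by have /eqP := b2_eq0 i isT; rewrite mulf_eq0 orbb => /eqP.
Qed.

Lemma col_mx_ge0 m n (x1 : 'cV[R]_m) (x2 : 'cV[R]_n) :
  (forall j, 0 <= x1 j 0) -> (forall j, 0 <= x2 j 0) -> forall j, 0 <= col_mx x1 x2 j 0.
Proof.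
by move=> h1 h2 j; rewrite -(splitK j); case: (split j) => k; rewrite ?col_mxEu ?col_mxEd.
Qed.

Lemma row_mx_ge0 m n (y1 : 'rV[R]_m) (y2 : 'rV[R]_n) :
  (forall j, 0 <= y1 0 j) -> (forall j, 0 <= y2 0 j) -> forall j, 0 <= row_mx y1 y2 0 j.
Proof.
by move=> h1 h2 j; rewrite -(splitK j); case: (split j) => k; rewrite ?row_mxEl ?row_mxEr.
Qed.

(* Fourier-Motzkin elimination of the first column [a]: when the certificate [y]
   for [A1 x = b] fails on [a] ([y a < 0]), recurse on the columns [fm _ X],
   which [y] annihilates. *)
Lemma farkas_alternative_row_mx m n (a : 'cV[R]_m) (A1 : 'M[R]_(m, n)) b :
  (forall (A' : 'M_(m, n)) b', farkas_alternative A' b') -> farkas_alternative (row_mx a A1) b.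
Proof.
move=> IH.
have [[x1 [x1_ge0 e1]]|[y [yA1_ge0 yb_lt0]]] := IH A1 b.
  left; exists (col_mx 0 x1); split; last by rewrite mul_row_col mulmx0 add0r.
  by apply: col_mx_ge0 => // j; rewrite mxE.
set al := (y *m a) 0 0.
have [al_ge0|al_lt0] := leP 0 al.
  right; exists y; split=> //; rewrite mul_mx_row.
  by apply: row_mx_ge0 => // j; rewrite ord1.
have al_neq0 : al != 0 by rewrite lt_eqF.
pose fm k (X : 'M[R]_(m, k)) := al *: X - a *m (y *m X).
have [[x2 [x2_ge0 e2]]|[y2 [y2A2_ge0 y2b2_lt0]]] := IH (fm _ A1) (fm _ b).
  set be := (y *m b) 0 0; set ga := (y *m A1 *m x2) 0 0.
  have ga_ge0 : 0 <= ga by apply: mulmx_ge0 => [i j|i j]; rewrite ?ord1.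
  set t := (be - ga) / al.
  have t_ge0 : 0 <= t.
    by rewrite ltW // ltr_ndivlMr // mul0r subr_lt0 (lt_le_trans yb_lt0).
  left; exists (col_mx t%:M x2); split.
    by apply: col_mx_ge0 => // j; rewrite ord1 mxE eqxx mulr1n.
  rewrite mul_row_col mul_mx_scalar; apply: (scalerI al_neq0).
  move: e2; rewrite /fm mulmxBl -scalemxAl -mulmxA.
  rewrite (mulmx_mx11 a (y *m b)) (mulmx_mx11 a (y *m A1 *m x2)) -/be -/ga => e2.
  have -> : al *: b = al *: (A1 *m x2) - ga *: a + be *: a by rewrite e2 subrK.
  rewrite scalerDr scalerA /t mulrC divfK // scalerBl.
  by rewrite addrC -!addrA; congr (_ + _); rewrite addrC.
set c := (y2 *m a) 0 0.
have elimE k (X : 'M[R]_(m, k)) :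
    ((c / al) *: y - y2) *m X = - al^-1 *: (y2 *m fm _ X).
  rewrite mulmxBr -scalemxAr [y2 *m (a *m _)]mulmxA (mul_mx11_mx (y2 *m a)) -/c.
  rewrite mulmxBl -scalemxAl scalerBr !scalerA !mulNr mulVf // scaleN1r scaleNr.
  by rewrite opprK addrC mulrC.
right; exists ((c / al) *: y - y2); split.
  rewrite mul_mx_row; apply: row_mx_ge0 => j.
    rewrite mulmxBl -scalemxAl [y *m a]mx11_scalar [y2 *m a]mx11_scalar -/al -/c.
    by rewrite scale_scalar_mx divfK // subrr mxE.
  by rewrite elimE mxE mulNr oppr_ge0 nmulr_rle0 ?invr_lt0.
by rewrite elimE mxE mulNr oppr_lt0 nmulr_rgt0 ?invr_lt0.
Qed.

Lemma farkas m n (A : 'M[R]_(m, n)) (b : 'cV[R]_m) : farkas_alternative A b.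
Proof.
elim: n A b => [|n IH] A b; first exact: farkas_alternative0.
rewrite -[A](@hsubmxK _ _ 1 n); exact: farkas_alternative_row_mx.
Qed.

Lemma mulmx_solvable m n (A : 'M[R]_(m, n)) (b : 'cV[R]_m) :
  (forall y : 'rV_m, y *m A = 0 -> 0 <= (y *m b) 0 0) -> exists z, A *m z = b.
Proof.
move=> hker; have [[x [_ e]]|[y [hy yb_lt0]]] := farkas (row_mx A (- A)) b.
  exists (usubmx x - dsubmx x).
  by rewrite -e -[x in RHS]vsubmxK mul_row_col mulNmx mulmxBr.
suff /hker : y *m A = 0 by rewrite leNgt yb_lt0.
apply/rowP => j; rewrite [RHS]mxE; apply/eqP; rewrite eq_le.
move: (hy (lshift n j)) (hy (rshift n j)).
rewrite mul_mx_row row_mxEl row_mxEr mulmxN [in X in _ -> X]mxE oppr_ge0.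
by move=> -> ->.
Qed.

End Farkas.

Section NonnegCone.
Variable R : realFieldType.

Lemma mulmx_trE m n (A : 'M[R]_(m, n)) (y : 'rV[R]_n) i : (A *m y^T) i 0 = (y *m A^T) 0 i.
Proof. by rewrite -{1}[A]trmxK -trmx_mul mxE. Qed.

Definition nonneg_rowspan_in_cone p q (M : 'M[R]_(p, q)) : Prop :=
  forall x : 'rV_p, (forall j, 0 <= (x *m M) 0 j) ->
  exists x' : 'rV_p, (forall i, 0 <= x' 0 i) /\ x *m M = x' *m M.

Lemma nonneg_rowspan_in_cone_tr p q (M : 'M[R]_(p, q)) :
  nonneg_rowspan_in_cone M -> nonneg_rowspan_in_cone M^T.
Proof.
move=> hM y yMt_ge0.
have [[z [z_ge0 e]]|[x [xM_ge0 xMy_lt0]]] := farkas M (M *m y^T).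
  exists z^T; split=> [i|]; first by rewrite mxE.
  by apply: trmx_inj; rewrite !trmx_mul !trmxK.
have [x' [x'_ge0 exM]] := hM x xM_ge0.
suff : 0 <= (x *m (M *m y^T)) 0 0 by rewrite leNgt xMy_lt0.
rewrite mulmxA exM -mulmxA; apply: mulmx_ge0 => i j; rewrite ord1 //.
by rewrite mulmx_trE.
Qed.

Lemma nonneg_rowspan_in_coneT p q (M : 'M[R]_(p, q)) :
  nonneg_rowspan_in_cone M^T <-> nonneg_rowspan_in_cone M.
Proof.
by split=> [/nonneg_rowspan_in_cone_tr|]; rewrite ?trmxK //; exact: nonneg_rowspan_in_cone_tr.
Qed.

Section NonnegMatrix.
Variables (p q : nat) (M : 'M[R]_(p, q)).
Hypothesis M_ge0 : forall i j, 0 <= M i j.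

Lemma row_cone_conditionE :
  (forall y : 'rV_q,
     (exists x : 'rV_p, (forall i, 0 <= x 0 i) /\ y = x *m M) <->
     ((exists x : 'rV_p, y = x *m M) /\ (forall j, 0 <= y 0 j))) <->
  nonneg_rowspan_in_cone M.
Proof.
split=> [h x xM_ge0 | h y].
  by have [|x' [x'_ge0 ->]] := (h (x *m M)).2; [split; first exists x | exists x'].
split=> [[x [x_ge0 ->]] | [[x ->] /h [x' [x'_ge0 ->]]]]; last by exists x'.
split; first by exists x.
by apply: mulmx_ge0 => // i j; rewrite ord1.
Qed.

Lemma col_cone_conditionE :
  (forall u : 'cV_p,
     (exists z : 'cV_q, (forall j, 0 <= z j 0) /\ u = M *m z) <->
     ((exists z : 'cV_q, u = M *m z) /\ (forall i, 0 <= u i 0))) <->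
  nonneg_rowspan_in_cone M^T.
Proof.
split=> [h y yMt_ge0 | h u].
  have [|z [z_ge0 e]] := (h (M *m y^T)).2.
    by split=> [|i]; [exists y^T | rewrite mulmx_trE].
  exists z^T; split=> [i|]; first by rewrite mxE.
  by apply: trmx_inj; rewrite !trmx_mul !trmxK.
split=> [[z [z_ge0 ->]] | [[z ->] Mz_ge0]].
  split=> [|i]; first by exists z.
  by apply: mulmx_ge0 => // k j; rewrite ord1.
have [|x [x_ge0 e]] := h z^T; first by move=> i; rewrite -mulmx_trE trmxK.
exists x^T; split=> [j|]; first by rewrite mxE.
by apply: trmx_inj; rewrite !trmx_mul !trmxK.
Qed.

End NonnegMatrix.
End NonnegCone.

(* Complete [1] to a basis of the column space of [M]. *)
Lemma colspan_one_factor (F : fieldType) p q (M : 'M[F]_(p, q)) :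
  (0 < p)%N -> (exists z : 'cV_q, M *m z = const_mx 1) ->
  exists n (V : 'M[F]_(p, n)) (B : 'M[F]_(1 + n, q)),
    [/\ M = row_mx (const_mx 1) V *m B, row_free B, (B <= M)%MS
      & \rank (row_mx (const_mx 1 : 'cV_p) V) = \rank M].
Proof.
move=> p_gt0 [z Mz1].
set one := const_mx 1 : 'rV[F]_p.
have one_sub : (one <= M^T)%MS.
  by apply/submxP; exists z^T; rewrite -trmx_mul Mz1 trmx_const.
have one_neq0 : one != 0.
  by apply/eqP => /rowP/(_ (Ordinal p_gt0)); rewrite !mxE; apply/eqP/oner_neq0.
set D := (M^T :\: one)%MS; set n := \rank D.
set Et := col_mx one (row_base D).
have [D_sub_base base_sub_D] : (D <= row_base D)%MS /\ (row_base D <= D)%MS.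
  by rewrite !eq_row_base.
have Et_eq : (Et == M^T)%MS.
  apply/andP; split; first by rewrite col_mx_sub one_sub eq_row_base diffmxSl.
  rewrite -addsmxE -{1}(addsmx_diff_cap_eq M^T one) addsmx_sub.
  rewrite (submx_trans D_sub_base (addsmxSr _ _)) /=.
  exact: submx_trans (capmxSr _ _) (addsmxSl _ _).
have Et_free : row_free Et.
  rewrite /row_free /Et -addsmxE mxrank_disjoint_sum ?rank_rV ?eq_row_base ?one_neq0 //.
  apply/eqP; rewrite -submx0 capmxC.
  by rewrite (submx_trans (capmxS base_sub_D (submx_refl one))) ?capmx_diff.
have rankM : \rank M = (1 + n)%N.
  by rewrite -mxrank_tr -(eqmx_rank Et_eq); move/eqP: Et_free.
have /submxP [X eX] : (M^T <= Et)%MS by case/andP: Et_eq.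
have eM : M = Et^T *m X^T by rewrite -trmx_mul -eX trmxK.
have B_free : row_free X^T.
  rewrite /row_free eqn_leq rank_leq_row /=.
  by have := mxrankM_maxr Et^T X^T; rewrite -eM rankM.
exists n, (row_base D)^T, X^T; split=> //.
- by rewrite eM tr_col_mx trmx_const.
- have M_sub : (M <= X^T)%MS by rewrite eM submxMl.
  by rewrite -(mxrank_leqif_sup M_sub).2 rankM; move/eqnP: B_free => ->.
- by rewrite -trmx_const -tr_col_mx mxrank_tr rankM; move/eqnP: Et_free.
Qed.

Section HomogenizedSlack.
Variables (R : realType) (q n : nat) (W : 'M[R]_(q, n)) (w : 'cV[R]_q).

(* For [t > 0], [hslack t u] is [t] times the slack [w - W x] of [x = u / t]. *)
Definition hslack (t : R) (u : 'rV[R]_n) : 'rV[R]_q := t *: w^T - u *m W^T.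

Lemma hslackE t u j : hslack t u 0 j = t * w j 0 - (W *m u^T) j 0.
Proof. by rewrite mulmx_trE !mxE. Qed.

Lemma mul_slack_matrix p (V : 'M[R]_(p, n)) (x : 'rV[R]_p) :
  x *m (row_mx (const_mx 1) V *m (row_mx w (- W))^T) = hslack (\sum_i x 0 i) (x *m V).
Proof.
rewrite tr_row_mx linearN /= mulmxA mul_mx_row mul_row_col mul_mx11_mx mulmxN.
congr (_ *: _ - _); rewrite mxE; apply: eq_bigr => i _; by rewrite mxE mulr1.
Qed.

Lemma in_halfspaces_hslack x : in_halfspaces W w x <-> forall j, 0 <= hslack 1 x 0 j.
Proof. by split=> h j; have := h j; rewrite hslackE mul1r subr_ge0. Qed.

Lemma in_halfspacesE x :
  in_halfspaces W w x <->
  forall j, 0 <= (row_mx (const_mx 1 : 'M_1) x *m (row_mx w (- W))^T) 0 j.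
Proof.
rewrite -[row_mx _ _ *m _]mul1mx mul_slack_matrix big_ord1 mxE mul1mx.
exact: in_halfspaces_hslack.
Qed.

Lemma mulmx_tr_combE (a b : 'rV[R]_n) (k : R) j :
  (W *m (a + k *: b)^T) j 0 = (W *m a^T) j 0 + k * (W *m b^T) j 0.
Proof. by rewrite linearD linearZ /= mulmxDr -scalemxAr !mxE. Qed.

Lemma mulmx_tr_scaleE (b : 'rV[R]_n) (k : R) j :
  (W *m (k *: b)^T) j 0 = k * (W *m b^T) j 0.
Proof. by rewrite linearZ /= -scalemxAr mxE. Qed.

End HomogenizedSlack.

Section SlackMatrixOfPolytope.
Variables (R : realType) (p q n : nat).
Variables (V : 'M[R]_(p, n)) (W : 'M[R]_(q, n)) (w : 'cV[R]_q).
Hypothesis conv_eq_halfspaces : forall x, in_conv V x <-> in_halfspaces W w x.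

Local Notation S := (row_mx (const_mx 1) V *m (row_mx w (- W))^T).

Lemma in_conv_norm_le (x : 'rV[R]_n) i : in_conv V x -> `|x 0 i| <= \sum_r `|V r i|.
Proof.
case=> lam [lam_ge0 [lam_sum1 ->]]; rewrite mxE.
apply: le_trans (ler_norm_sum _ _ _) (ler_sum _ _) => r _.
rewrite normrM ger0_norm // ler_piMl // -lam_sum1 (bigD1 r) //= lerDl.
exact: sumr_ge0.
Qed.

(* [x0 + k d] stays in the bounded set [conv V] for every [k >= 0]. *)
Lemma recession_eq0 (x0 d : 'rV[R]_n) :
  in_conv V x0 -> (forall j, (W *m d^T) j 0 <= 0) -> d = 0.
Proof.
move=> x0_in d_rec; apply/rowP => i; rewrite mxE; apply/eqP/negPn/negP => di_neq0.
set C := \sum_r `|V r i|.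
have C_ge0 : 0 <= C by apply: sumr_ge0.
set k := (C + `|x0 0 i| + 1) / `|d 0 i|.
have k_ge0 : 0 <= k by rewrite divr_ge0 // !addr_ge0.
have /(in_conv_norm_le i) : in_conv V (x0 + k *: d).
  apply/conv_eq_halfspaces => j; rewrite mulmx_tr_combE.
  have := (conv_eq_halfspaces x0).1 x0_in j; have := d_rec j; nra.
have kd : `|k * d 0 i| = C + `|x0 0 i| + 1.
  by rewrite normrM ger0_norm // divfK // normr_eq0.
have : `|k * d 0 i| <= `|(x0 + k *: d) 0 i| + `|x0 0 i|.
  by have := ler_normB ((x0 + k *: d) 0 i) (x0 0 i); rewrite !mxE addrAC subrr add0r.
rewrite -/C kd; lra.
Qed.

(* [u - t x0] is a recession direction. *)
Lemma hslack_ge0_nonpos (x0 : 'rV[R]_n) t u : in_conv V x0 -> t <= 0 ->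
  (forall j, 0 <= hslack W w t u 0 j) -> u = t *: x0 /\ hslack W w t u = 0.
Proof.
move=> x0_in t_le0 slack_ge0; have x0_half := (conv_eq_halfspaces x0).1 x0_in.
have u_eq : u = t *: x0.
  apply/eqP; rewrite -subr_eq0; apply/eqP/(recession_eq0 x0_in) => j.
  rewrite -scaleNr mulmx_tr_combE.
  have := slack_ge0 j; rewrite hslackE; have := x0_half j; nra.
split=> //; apply/rowP => j; rewrite [RHS]mxE hslackE u_eq.
have := slack_ge0 j; rewrite hslackE u_eq mulmx_tr_scaleE; have := x0_half j; nra.
Qed.

Lemma slack_nonneg_rowspan_in_cone (x0 : 'rV[R]_n) :
  in_conv V x0 -> nonneg_rowspan_in_cone S.
Proof.
move=> x0_in x; rewrite mul_slack_matrix; set t := \sum_i x 0 i; set u := x *m V.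
move=> slack_ge0; have [t_gt0|t_le0] := ltP 0 t; last first.
  have [_ ->] := hslack_ge0_nonpos x0_in t_le0 slack_ge0.
  by exists 0; split=> [i|]; rewrite ?mxE ?mul0mx.
have t_neq0 : t != 0 by rewrite gt_eqF.
have [lam [lam_ge0 [lam_sum1 u_eq]]] : in_conv V (t^-1 *: u).
  apply/conv_eq_halfspaces/in_halfspaces_hslack => j; have := slack_ge0 j.
  rewrite !hslackE mulmx_tr_scaleE.
  have -> : 1 * w j 0 - t^-1 * (W *m u^T) j 0 = t^-1 * (t * w j 0 - (W *m u^T) j 0).
    by field.
  by move=> h; rewrite mulr_ge0 // invr_ge0 ltW.
exists (t *: lam); split=> [i|]; first by rewrite mxE mulr_ge0 // ltW.
rewrite mul_slack_matrix -scalemxAl -u_eq scalerA mulfV // scale1r.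
congr hslack; under eq_bigr do rewrite mxE.
by rewrite -mulr_sumr lam_sum1 mulr1.
Qed.

Lemma slack_one_in_colspan (x1 x2 : 'rV[R]_n) :
  in_conv V x1 -> in_conv V x2 -> x1 != x2 -> exists z : 'cV_q, S *m z = const_mx 1.
Proof.
move=> x1_in x2_in x12; apply: mulmx_solvable => y; rewrite mul_slack_matrix => yS0.
have -> : (y *m (const_mx 1 : 'cV[R]_p)) 0 0 = \sum_i y 0 i.
  by rewrite mxE; apply: eq_bigr => i _; rewrite mxE mulr1.
rewrite leNgt; apply/negP => t_lt0.
have slack_ge0 j : 0 <= hslack W w (\sum_i y 0 i) (y *m V) 0 j by rewrite yS0 mxE.
have [u_eq1 _] := hslack_ge0_nonpos x1_in (ltW t_lt0) slack_ge0.
have [u_eq2 _] := hslack_ge0_nonpos x2_in (ltW t_lt0) slack_ge0.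
by move/negP: x12; apply; apply/eqP/(scalerI (ltr0_neq0 t_lt0)); rewrite -u_eq1 -u_eq2.
Qed.

End SlackMatrixOfPolytope.

Lemma slack_matrix_cone (R : realType) p q (M : 'M[R]_(p, q)) :
  is_slack_matrix M -> nonneg_rowspan_in_cone M /\ exists z : 'cV_q, M *m z = const_mx 1.
Proof.
case=> n [V [W [w [conv_eq [[x1 [x2 [x1_in x2_in x12]]] ->]]]]].
split; first exact: slack_nonneg_rowspan_in_cone x1_in.
exact: slack_one_in_colspan x1_in x2_in x12.
Qed.

Lemma rank_gt1_rows_neq (F : fieldType) p n (V : 'M[F]_(p, n)) :
  (1 < \rank (row_mx (const_mx 1%R : 'cV[F]_p) V))%N -> exists i k, row i V != row k V.
Proof.
move=> rank_gt1; have p_gt0 := leq_trans (ltnW rank_gt1) (rank_leq_row _).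
have [/existsP [i /existsP [k ik]]|] := boolP [exists i, exists k, row i V != row k V].
  by exists i, k.
rewrite negb_exists => /forallP rows_eq; exfalso; move: rank_gt1; apply/negP.
set i0 := Ordinal p_gt0.
set E := row_mx (const_mx 1 : 'cV[F]_p) V.
have -> : E = const_mx 1 *m row i0 E.
  apply/row_matrixP => i; rewrite row_mul row_const mul_mx11_mx mxE scale1r.
  have := rows_eq i; rewrite negb_exists => /forallP/(_ i0); rewrite negbK => /eqP rowV.
  by rewrite !row_row_mx !row_const rowV.
by rewrite -leqNgt (leq_trans (mxrankM_maxl _ _)) ?rank_leq_col.
Qed.

Section PolytopeOfCone.
Variables (R : realType) (p n : nat) (V : 'M[R]_(p, n)).

Local Notation E := (row_mx (const_mx 1 : 'cV[R]_p) V).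

Lemma in_convE x :
  in_conv V x <->
  exists lam : 'rV_p, (forall i, 0 <= lam 0 i) /\ lam *m E = row_mx (const_mx 1) x.
Proof.
have sumE (lam : 'rV[R]_p) : lam *m const_mx 1 = const_mx (\sum_i lam 0 i).
  by apply/rowP => j; rewrite !mxE; apply: eq_bigr => i _; rewrite mxE mulr1.
split=> [[lam [lam_ge0 [lam_sum1 ->]]]|[lam [lam_ge0]]].
  by exists lam; rewrite mul_mx_row sumE lam_sum1.
rewrite mul_mx_row sumE => /eq_row_mx [/rowP/(_ 0) lam_sum1 <-].
by exists lam; rewrite !mxE in lam_sum1.
Qed.

Lemma row_in_conv i : in_conv V (row i V).
Proof.
exists (delta_mx 0 i); split=> [r|]; first by rewrite mxE ler0n.
split; last by rewrite -rowE.
rewrite (bigD1 i) //= mxE !eqxx big1 ?addr0 // => r /negPf r_neq_i.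
by rewrite mxE r_neq_i andbF.
Qed.

End PolytopeOfCone.

Lemma slack_matrix_of_cone (R : realType) p q (M : 'M[R]_(p, q)) :
  (forall i j, 0 <= M i j) -> (1 < \rank M)%N -> nonneg_rowspan_in_cone M ->
  (exists z : 'cV_q, M *m z = const_mx 1) -> is_slack_matrix M.
Proof.
move=> M_ge0 rank_gt1 cone one_in_colspan.
have p_gt0 := leq_trans (ltnW rank_gt1) (rank_leq_row M).
have [n [V [B [eM B_free /submxP [G eB] rankE]]]] := colspan_one_factor p_gt0 one_in_colspan.
exists n, V, (- (dsubmx B)^T), (usubmx B)^T.
have eBt : (row_mx (usubmx B)^T (- - (dsubmx B)^T))^T = B.
  by rewrite opprK tr_row_mx !trmxK vsubmxK.
split; last split; last by rewrite eBt.
- move=> x; rewrite in_convE in_halfspacesE eBt; split.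
    case=> lam [lam_ge0 <-]; rewrite -mulmxA -eM.
    by apply: mulmx_ge0 => // i j; rewrite ord1.
  move=> xB_ge0; have [|lam [lam_ge0 e]] := cone (row_mx (const_mx 1) x *m G).
    by rewrite -mulmxA -eB.
  exists lam; split=> //; apply: (row_free_inj B_free).
  by rewrite /= -mulmxA -eM -e -mulmxA -eB.
- have [i [k ik]] := rank_gt1_rows_neq (leq_trans rank_gt1 (eq_leq (esym rankE))).
  by exists (row i V), (row k V); split=> //; apply: row_in_conv.
Qed.

Unset Implicit Arguments.

Theorem corollary2p7 (R : realType) (p q : nat) (M : 'M[R]_(p, q))
  (hM : forall i j, 0 <= M i j) (hrank : (2 <= \rank M)%N) :
  (is_slack_matrix M <->
     (forall y : 'rV[R]_q,
        (exists x : 'rV[R]_p, (forall i, 0 <= x 0 i) /\ y = x *m M) <->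
        ((exists x : 'rV[R]_p, y = x *m M) /\ (forall j, 0 <= y 0 j))) /\
     (exists z : 'cV[R]_q, M *m z = const_mx 1)) /\
  (is_slack_matrix M <->
     (forall u : 'cV[R]_p,
        (exists z : 'cV[R]_q, (forall j, 0 <= z j 0) /\ u = M *m z) <->
        ((exists z : 'cV[R]_q, u = M *m z) /\ (forall i, 0 <= u i 0))) /\
     (exists z : 'cV[R]_q, M *m z = const_mx 1)).
Proof.
have slack_iff : is_slack_matrix M <->
    nonneg_rowspan_in_cone M /\ exists z : 'cV_q, M *m z = const_mx 1.
  split=> [/slack_matrix_cone //|[cone one]].
  exact: slack_matrix_of_cone.
rewrite (row_cone_conditionE hM) (col_cone_conditionE hM) nonneg_rowspan_in_coneT.
by split; exact: slack_iff.
Qed.
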